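(* Let $-1<r<1$ and $\nu=5$ (sample size $n=6$). The posterior density of the scale-invariant slope under the Cauchy prior, $$p(\tilde\beta\mid y)=\frac{p_C(\tilde\beta)J(\tilde\beta,5,r,1)}{\int_{-\infty}^\infty p_C(x)J(x,5,r,1)\,dx},\qquad p_C(x)=\frac1\pi\frac1{1+x^2},$$ equals $$p(\tilde\beta\mid y)=K(r)\,\frac{1}{1+\tilde\beta^2}\cdot\frac{|\tilde\beta|(\tilde\beta^2-r\tilde\beta+1)}{(\tilde\beta^2-2r\tilde\beta+1)^2},\qquad K(r)={}_2F_1(2,1;\tfrac32;r^2)^{-1}.$$
   Context: Functions: $p_t(t;\nu)$ Student $t$ density; $P_F(x;\nu_1,\nu_2)$ $F$ distribution function; for $\nu>1$, $-1<r<1$, $\tilde\beta>0$: $t_-(\nu,r)=-\sqrt{\nu}\,r/\sqrt{1-r^2}$, $t_+(\tilde\beta,\nu,r)=\sqrt{\nu}(\tilde\beta-r)/\sqrt{1-r^2}$, $F(t,\tilde\beta,\nu,r)=\frac{\nu-1}{\nu+1}\frac{\nu+t^2}{[t_+-t_-]^2-[t-t_-]^2}$, $I(\tilde\beta,\nu,r)=\int_{t_-}^{t_+}p_t(t;\nu)P_F(F(t,\tilde\beta,\nu,r);\nu+1,\nu-1)\,dt$, and for $\beta\ne0$, $l>0$: $J(\beta,\nu,r,l)=I(|\beta|/l,\nu,r\,\mathrm{sign}\beta)+I(l/|\beta|,\nu,r\,\mathrm{sign}\beta)$. ${}_2F_1$ is the Gauss hypergeometric function. *)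

From Stdlib Require Import Reals Lra Arith ClassicalEpsilon.
Open Scope R_scope.

Definition the_val (P : R -> Prop) : R :=
  match excluded_middle_informative (exists v, P v) with
  | left h => proj1_sig (constructive_indefinite_description P h)
  | right _ => 0
  end.

Definition is_RInt (f : R -> R) (a b v : R) : Prop :=
  exists pr : Riemann_integrable f a b, RiemannInt pr = v.
Definition RInt (f : R -> R) (a b : R) : R := the_val (is_RInt f a b).

Definition is_improper_left (f : R -> R) (a b v : R) : Prop :=
  forall eps, 0 < eps -> exists d, 0 < d /\
    forall e, 0 < e < d -> exists w, is_RInt f (a + e) b w /\ Rabs (w - v) < eps.

Definition is_improper_0inf (f : R -> R) (v : R) : Prop :=
  forall eps, 0 < eps -> exists d M0, 0 < d /\
    forall e M, 0 < e < d -> M0 < M ->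
      exists w, is_RInt f e M w /\ Rabs (w - v) < eps.

Definition is_improper_R (f : R -> R) (v : R) : Prop :=
  forall eps, 0 < eps -> exists d M0, 0 < d /\
    forall e M, 0 < e < d -> M0 < M ->
      exists w1 w2, is_RInt f (- M) (- e) w1 /\ is_RInt f e M w2 /\
                    Rabs (w1 + w2 - v) < eps.

Definition Gamma (x : R) : R :=
  the_val (is_improper_0inf (fun t => Rpower t (x - 1) * exp (- t))).

Definition p_t (t nu : R) : R :=
  Gamma ((nu + 1) / 2) / (sqrt (nu * PI) * Gamma (nu / 2)) *
  Rpower (1 + t ^ 2 / nu) (- (nu + 1) / 2).

Definition p_F (s d1 d2 : R) : R :=
  Gamma ((d1 + d2) / 2) / (Gamma (d1 / 2) * Gamma (d2 / 2)) *
  Rpower (d1 / d2) (d1 / 2) * Rpower s (d1 / 2 - 1) *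
  Rpower (1 + d1 * s / d2) (- (d1 + d2) / 2).

Definition P_F (x d1 d2 : R) : R :=
  if Rlt_dec 0 x then the_val (is_improper_left (fun s => p_F s d1 d2) 0 x) else 0.

Definition t_minus (nu r : R) : R := - sqrt nu * r / sqrt (1 - r ^ 2).
Definition t_plus (bt nu r : R) : R := sqrt nu * (bt - r) / sqrt (1 - r ^ 2).

Definition Ffun (t bt nu r : R) : R :=
  (nu - 1) / (nu + 1) * (nu + t ^ 2) /
  ((t_plus bt nu r - t_minus nu r) ^ 2 - (t - t_minus nu r) ^ 2).

Definition Ifun (bt nu r : R) : R :=
  RInt (fun t => p_t t nu * P_F (Ffun t bt nu r) (nu + 1) (nu - 1))
       (t_minus nu r) (t_plus bt nu r).

Definition sgn (x : R) : R := if Rlt_dec 0 x then 1 else if Rlt_dec x 0 then -1 else 0.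

Definition Jfun (b nu r l : R) : R :=
  Ifun (Rabs b / l) nu (r * sgn b) + Ifun (l / Rabs b) nu (r * sgn b).

Definition p_C (x : R) : R := / PI * / (1 + x ^ 2).

Definition posterior5 (r b : R) : R :=
  p_C b * Jfun b 5 r 1 / the_val (is_improper_R (fun x => p_C x * Jfun x 5 r 1)).

Fixpoint poch (a : R) (n : nat) : R :=
  match n with O => 1 | S k => poch a k * (a + INR k) end.

Definition hyp2F1 (a b c z : R) : R :=
  the_val (infinite_sum (fun n => poch a n * poch b n / (poch c n * INR (Factorial.fact n)) * z ^ n)).

From Pilot Require Import Defs.
From Stdlib Require Import Reals Lra Lia ClassicalEpsilon.
From Coquelicot Require Import Coquelicot.
Open Scope R_scope.

(* With integral degrees of freedom the t(5) density and the F(6, 4)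
   distribution function are rational (their Gamma constants only need to be
   positive, since they cancel).  The substitution [v = sqrt (1 - r^2) t / sqrt 5 + r]
   maps [t_-, t_+] onto [0, bt] and turns the integrand of [I(bt, 5, r)] into a
   rational function of [v] with a rational primitive; the terms at [bt] and
   [1/bt] of [J] then add up to [C(r) |b| (b^2 - r b + 1) / (b^2 - 2 r b + 1)^2].
   For the normalising integral the negative half-line is folded onto the
   positive one ([r -> -r]), [(1, +oo)] onto [(0, 1)] by [b -> 1/b], and
   [u = (1 - b^2) / (1 + b^2)] gives [int_0^1 du / (1 - r^2 (1 - u^2))^2], which
   is [2F1(2, 1; 3/2; r^2)] by termwise integration (the coefficients are Wallis
   integrals). *)

Lemma the_val_unique (P : R -> Prop) (v : R) :
  P v -> (forall w, P w -> w = v) -> the_val P = v.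
Proof.
  intros Hv Huniq. unfold the_val.
  destruct (excluded_middle_informative _) as [Hex | Hnex].
  - destruct (constructive_indefinite_description P Hex) as [x Hx]. simpl.
    now apply Huniq.
  - exfalso. apply Hnex. now exists v.
Qed.

Lemma eq_of_common_approx (v1 v2 : R) :
  (forall eps, 0 < eps -> exists w, Rabs (w - v1) < eps /\ Rabs (w - v2) < eps) ->
  v1 = v2.
Proof.
  intros Happrox. destruct (Req_dec v1 v2) as [E | Hne]; [exact E |].
  assert (Hpos : 0 < Rabs (v1 - v2) / 2).
  { assert (0 < Rabs (v1 - v2)) by (apply Rabs_pos_lt; intro; apply Hne; lra). lra. }
  destruct (Happrox _ Hpos) as [w [H1 H2]].
  pose proof (Rabs_triang (w - v2) (- (w - v1))) as Htri.
  rewrite Rabs_Ropp in Htri.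
  replace (w - v2 + - (w - v1)) with (v1 - v2) in Htri by ring. lra.
Qed.

Lemma riemann_of_is_RInt (f : R -> R) (a b v : R) :
  is_RInt f a b v -> Defs.is_RInt f a b v.
Proof.
  intros H. assert (E : ex_RInt f a b) by (exists v; exact H).
  exists (ex_RInt_Reals_0 f a b E).
  rewrite <- RInt_Reals. now apply is_RInt_unique.
Qed.

Lemma riemann_unique (f : R -> R) (a b v w : R) :
  Defs.is_RInt f a b v -> Defs.is_RInt f a b w -> v = w.
Proof. intros [p1 H1] [p2 H2]. subst. apply RiemannInt_P5. Qed.

Lemma riemann_RInt_eq (f : R -> R) (a b v : R) :
  is_RInt f a b v -> Defs.RInt f a b = v.
Proof.
  intros H. apply the_val_unique; [now apply riemann_of_is_RInt |].
  intros w Hw. eapply riemann_unique; [exact Hw | now apply riemann_of_is_RInt].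
Qed.

(* Coquelicot's integration lemmas, specialised to real-valued functions
   (this fixes the target normed module, which [apply] cannot infer). *)
Lemma ex_RInt_cont (f : R -> R) (a b : R) :
  (forall z, Rmin a b <= z <= Rmax a b -> continuous f z) -> ex_RInt f a b.
Proof. intros H. apply (ex_RInt_continuous (V := R_CompleteNormedModule)). exact H. Qed.

Lemma RInt_correct_R (f : R -> R) (a b : R) : ex_RInt f a b -> is_RInt f a b (RInt f a b).
Proof. intros H. apply (RInt_correct (V := R_CompleteNormedModule)). exact H. Qed.

Lemma RInt_unique_R (f : R -> R) (a b l : R) : is_RInt f a b l -> RInt f a b = l.
Proof. intros H. apply (is_RInt_unique (V := R_CompleteNormedModule)). exact H. Qed.

Lemma is_RInt_uniq_R (f : R -> R) (a b l1 l2 : R) :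
  is_RInt f a b l1 -> is_RInt f a b l2 -> l1 = l2.
Proof. intros H1 H2. rewrite <- (RInt_unique_R f a b l1 H1). now apply RInt_unique_R. Qed.

Lemma ex_derive_cont (f : R -> R) (x : R) : ex_derive f x -> continuous f x.
Proof. intros H. apply (ex_derive_continuous (K := R_AbsRing) (V := R_NormedModule)). exact H. Qed.

(* Side conditions of [auto_derive]: a product of powers is nonzero when each
   (linear-arithmetic-provably) nonzero factor is. *)
Ltac nonzero :=
  repeat (apply Rmult_integral_contrapositive_currified || apply pow_nonzero); lra.

Lemma is_RInt_antiderivative (f df : R -> R) (a b : R) :
  (forall x, Rmin a b <= x <= Rmax a b -> is_derive f x (df x)) ->
  (forall x, Rmin a b <= x <= Rmax a b -> continuous df x) ->
  is_RInt df a b (f b - f a).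
Proof. intros H1 H2. apply (is_RInt_derive (V := R_CompleteNormedModule)); auto. Qed.

Lemma is_RInt_subst (f g dg : R -> R) (a b : R) :
  (forall x, Rmin a b <= x <= Rmax a b -> continuous f (g x)) ->
  (forall x, Rmin a b <= x <= Rmax a b -> is_derive g x (dg x) /\ continuous dg x) ->
  is_RInt (fun y => dg y * f (g y)) a b (RInt f (g a) (g b)).
Proof. intros H1 H2. apply (is_RInt_comp (V := R_CompleteNormedModule)); auto. Qed.

Lemma is_RInt_scal_R (f : R -> R) (a b k l : R) :
  is_RInt f a b l -> is_RInt (fun y => k * f y) a b (k * l).
Proof. intros H. apply (is_RInt_scal (V := R_NormedModule)). exact H. Qed.

Lemma is_RInt_plus_R (f g : R -> R) (a b l1 l2 : R) :
  is_RInt f a b l1 -> is_RInt g a b l2 -> is_RInt (fun y => f y + g y) a b (l1 + l2).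
Proof. intros H1 H2. apply (is_RInt_plus (V := R_NormedModule)); auto. Qed.

Lemma is_RInt_ext_R (f g : R -> R) (a b l : R) :
  (forall x, Rmin a b < x < Rmax a b -> f x = g x) -> is_RInt f a b l -> is_RInt g a b l.
Proof. intros H1 H2. apply (is_RInt_ext (V := R_NormedModule) f g); auto. Qed.

Lemma RInt_swap_R (f : R -> R) (a b : R) : ex_RInt f a b -> RInt f b a = - RInt f a b.
Proof.
  intros H. apply RInt_unique_R. apply (is_RInt_swap (V := R_NormedModule)).
  now apply RInt_correct_R.
Qed.

Lemma RInt_Chasles_R (f : R -> R) (a b c : R) :
  ex_RInt f a b -> ex_RInt f b c -> RInt f a b + RInt f b c = RInt f a c.
Proof. intros H1 H2. apply (RInt_Chasles (V := R_CompleteNormedModule)); auto. Qed.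

Lemma is_RInt_reflect (f : R -> R) (a b l : R) :
  is_RInt f a b l -> is_RInt (fun y => f (- y)) (- b) (- a) l.
Proof.
  intros H.
  assert (H' : is_RInt (fun y => -1 * f y) (- - b) (- - a) (-1 * - l)).
  { rewrite !Ropp_involutive. apply is_RInt_scal_R.
    now apply (is_RInt_swap (V := R_NormedModule)). }
  pose proof (is_RInt_comp_opp (V := R_NormedModule) _ _ _ _ H') as H2.
  replace l with (-1 * - l) by ring. apply is_RInt_ext_R with (2 := H2).
  intros x _. unfold opp; simpl. ring.
Qed.

Lemma is_RInt_abs_le (f : R -> R) (a b l M : R) : a <= b ->
  (forall x, a <= x <= b -> Rabs (f x) <= M) -> is_RInt f a b l -> Rabs l <= (b - a) * M.
Proof. intros H1 H2 H3. apply (norm_RInt_le_const (V := R_NormedModule) f a b l M); auto. Qed.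

(* Uniqueness of the improper integrals of [Defs]: at a common cut-off the
   approximating Riemann integrals coincide. *)
Lemma improper_left_unique (f : R -> R) (a b v1 v2 : R) :
  is_improper_left f a b v1 -> is_improper_left f a b v2 -> v1 = v2.
Proof.
  intros H1 H2. apply eq_of_common_approx. intros eps Heps.
  destruct (H1 eps Heps) as [d1 [Hd1 K1]]. destruct (H2 eps Heps) as [d2 [Hd2 K2]].
  set (e := Rmin d1 d2 / 2). pose proof (Rmin_l d1 d2). pose proof (Rmin_r d1 d2).
  assert (0 < Rmin d1 d2) by (apply Rmin_pos; auto).
  destruct (K1 e) as [w1 [I1 A1]]; [unfold e; lra |].
  destruct (K2 e) as [w2 [I2 A2]]; [unfold e; lra |].
  exists w1. rewrite (riemann_unique _ _ _ _ _ I1 I2) at 2. auto.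
Qed.

Lemma improper_0inf_unique (f : R -> R) (v1 v2 : R) :
  is_improper_0inf f v1 -> is_improper_0inf f v2 -> v1 = v2.
Proof.
  intros H1 H2. apply eq_of_common_approx. intros eps Heps.
  destruct (H1 eps Heps) as [d1 [M1 [Hd1 K1]]]. destruct (H2 eps Heps) as [d2 [M2 [Hd2 K2]]].
  set (e := Rmin d1 d2 / 2). pose proof (Rmin_l d1 d2). pose proof (Rmin_r d1 d2).
  assert (0 < Rmin d1 d2) by (apply Rmin_pos; auto).
  set (M := Rmax M1 M2 + 1). pose proof (Rmax_l M1 M2). pose proof (Rmax_r M1 M2).
  destruct (K1 e M) as [w1 [I1 A1]]; [unfold e; lra | unfold M; lra |].
  destruct (K2 e M) as [w2 [I2 A2]]; [unfold e; lra | unfold M; lra |].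
  exists w1. rewrite (riemann_unique _ _ _ _ _ I1 I2) at 2. auto.
Qed.

Lemma improper_R_unique (f : R -> R) (v1 v2 : R) :
  is_improper_R f v1 -> is_improper_R f v2 -> v1 = v2.
Proof.
  intros H1 H2. apply eq_of_common_approx. intros eps Heps.
  destruct (H1 eps Heps) as [d1 [M1 [Hd1 K1]]]. destruct (H2 eps Heps) as [d2 [M2 [Hd2 K2]]].
  set (e := Rmin d1 d2 / 2). pose proof (Rmin_l d1 d2). pose proof (Rmin_r d1 d2).
  assert (0 < Rmin d1 d2) by (apply Rmin_pos; auto).
  set (M := Rmax M1 M2 + 1). pose proof (Rmax_l M1 M2). pose proof (Rmax_r M1 M2).
  destruct (K1 e M) as [u1 [w1 [I1 [J1 A1]]]]; [unfold e; lra | unfold M; lra |].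
  destruct (K2 e M) as [u2 [w2 [I2 [J2 A2]]]]; [unfold e; lra | unfold M; lra |].
  exists (u1 + w1).
  rewrite (riemann_unique _ _ _ _ _ I1 I2), (riemann_unique _ _ _ _ _ J1 J2) at 2. auto.
Qed.

Lemma lub_approx (E : R -> Prop) (L eps : R) :
  is_lub E L -> 0 < eps -> exists y, E y /\ L - eps < y.
Proof.
  intros [_ Hleast] Heps. apply NNPP. intros Hnone.
  assert (L <= L - eps); [| lra]. apply Hleast. intros y Hy.
  destruct (Rle_lt_dec y (L - eps)); auto. exfalso. apply Hnone. now exists y.
Qed.

(* Monotone convergence for improper integrals on (0, +oo): a continuous
   nonnegative function whose integrals over [e, 1] and [1, M] stay bounded
   is improperly integrable, the value being the sum of the two suprema. *)
Section ImproperNonneg.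

Variable f : R -> R.
Hypothesis f_cont : forall t, 0 < t -> continuous f t.
Hypothesis f_nonneg : forall t, 0 < t -> 0 <= f t.

Lemma ex_RInt_pos (a b : R) : 0 < a <= b -> ex_RInt f a b.
Proof.
  intros Hab. apply ex_RInt_cont. intros z Hz.
  rewrite Rmin_left in Hz by lra. apply f_cont. lra.
Qed.

Lemma RInt_nonneg_extend (a b c d : R) :
  0 < a <= b -> b <= c -> c <= d -> RInt f b c <= RInt f a d.
Proof.
  intros Hab Hbc Hcd.
  rewrite <- (RInt_Chasles_R f a b d), <- (RInt_Chasles_R f b c d)
    by (apply ex_RInt_pos; lra).
  assert (0 <= RInt f a b) by (apply RInt_ge_0; [lra | apply ex_RInt_pos; lra |
    intros; apply f_nonneg; lra]).
  assert (0 <= RInt f c d) by (apply RInt_ge_0; [lra | apply ex_RInt_pos; lra |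
    intros; apply f_nonneg; lra]).
  lra.
Qed.

Lemma improper_0inf_of_bounded :
  (exists B0, forall e, 0 < e <= 1 -> RInt f e 1 <= B0) ->
  (exists B1, forall M, 1 <= M -> RInt f 1 M <= B1) ->
  exists v, is_improper_0inf f v /\ RInt f 1 2 <= v.
Proof.
  intros [B0 HB0] [B1 HB1].
  set (E0 := fun y => exists e, 0 < e <= 1 /\ y = RInt f e 1).
  set (E1 := fun y => exists M, 1 <= M /\ y = RInt f 1 M).
  destruct (completeness E0) as [L0 HL0].
  { exists B0. intros y [e [He ->]]. auto. }
  { exists (RInt f 1 1), 1. split; [lra | auto]. }
  destruct (completeness E1) as [L1 HL1].
  { exists B1. intros y [M [HM ->]]. auto. }
  { exists (RInt f 1 1), 1. split; [lra | auto]. }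
  assert (Hle0 : forall e, 0 < e <= 1 -> RInt f e 1 <= L0)
    by (intros e He; apply HL0; now exists e).
  assert (Hle1 : forall M, 1 <= M -> RInt f 1 M <= L1)
    by (intros M HM; apply HL1; now exists M).
  exists (L0 + L1). split.
  - intros eps Heps.
    destruct (lub_approx E0 L0 (eps/2) HL0) as [y0 [[e0 [He0 ->]] A0]]; [lra |].
    destruct (lub_approx E1 L1 (eps/2) HL1) as [y1 [[M1 [HM1 ->]] A1]]; [lra |].
    exists e0, M1. split; [lra |]. intros e M He HM.
    exists (RInt f e M). split.
    + apply riemann_of_is_RInt, RInt_correct_R, ex_RInt_pos. lra.
    + rewrite <- (RInt_Chasles_R f e 1 M) by (apply ex_RInt_pos; lra).
      pose proof (Hle0 e ltac:(lra)). pose proof (Hle1 M ltac:(lra)).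
      pose proof (RInt_nonneg_extend e e0 1 1 ltac:(lra) ltac:(lra) ltac:(lra)).
      pose proof (RInt_nonneg_extend 1 1 M1 M ltac:(lra) ltac:(lra) ltac:(lra)).
      apply Rabs_def1; lra.
  - pose proof (Hle0 1 ltac:(lra)). pose proof (Hle1 2 ltac:(lra)).
    assert (0 <= RInt f 1 1) by (rewrite RInt_point; unfold zero; simpl; lra).
    lra.
Qed.

End ImproperNonneg.

Definition gamma_integrand (a t : R) : R := Rpower t a * exp (- t).

Lemma gamma_integrand_nonneg (a t : R) : 0 <= gamma_integrand a t.
Proof.
  unfold gamma_integrand, Rpower.
  pose proof (exp_pos (a * ln t)). pose proof (exp_pos (- t)). nra.
Qed.

Lemma gamma_integrand_cont (a t : R) : 0 < t -> continuous (gamma_integrand a) t.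
Proof.
  intros Ht. apply ex_derive_cont. unfold gamma_integrand, Rpower. auto_derive. auto.
Qed.

(* For [0 <= a <= 4]: the integrand is at most 1 on (0, 1] and at most
   [t^4 exp (-t)] on [1, +oo), whose integral over [1, M] is below 65. *)
Lemma gamma_integrand_le_1 (a t : R) : 0 <= a -> 0 < t <= 1 -> gamma_integrand a t <= 1.
Proof.
  intros Ha Ht. unfold gamma_integrand.
  assert (Rpower t a <= 1).
  { destruct (Req_dec t 1) as [-> | Hne]; [unfold Rpower; rewrite ln_1, Rmult_0_r, exp_0; lra |].
    unfold Rpower. rewrite <- exp_0.
    assert (ln t < 0) by (rewrite <- ln_1; apply ln_increasing; lra).
    destruct (Req_dec a 0) as [-> | Ha0]; [rewrite Rmult_0_l; lra |].
    left. apply exp_increasing. nra. }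
  assert (exp (- t) <= 1) by (rewrite <- exp_0; left; apply exp_increasing; lra).
  assert (0 < Rpower t a) by apply exp_pos. pose proof (exp_pos (- t)). nra.
Qed.

Lemma RInt_pow4_exp_le (M : R) : 1 <= M -> RInt (fun t => t ^ 4 * exp (- t)) 1 M <= 65.
Proof.
  intros HM.
  set (P := fun t => - (t^4 + 4*t^3 + 12*t^2 + 24*t + 24) * exp (- t)).
  rewrite (RInt_unique_R _ _ _ (P M - P 1)).
  - unfold P.
    assert (0 <= (M^4 + 4*M^3 + 12*M^2 + 24*M + 24) * exp (- M))
      by (assert (HM0 : 0 <= M) by lra; apply Rmult_le_pos; [| left; apply exp_pos];
          pose proof (pow_le M 4 HM0); pose proof (pow_le M 3 HM0);
          pose proof (pow_le M 2 HM0); lra).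
    assert (exp (- (1)) < exp 0) by (apply exp_increasing; lra).
    rewrite exp_0 in *. pose proof (exp_pos (- (1))). lra.
  - apply (is_RInt_antiderivative P).
    + intros t _. unfold P. auto_derive. auto. ring.
    + intros t _. apply ex_derive_cont. auto_derive. auto.
Qed.

Lemma RInt_gamma_integrand_1_2_pos (a : R) : 0 <= a -> 0 < RInt (gamma_integrand a) 1 2.
Proof.
  intros Ha. apply Rlt_le_trans with (RInt (fun _ => exp (-2)) 1 2).
  - rewrite RInt_const. unfold scal; simpl; unfold mult; simpl. pose proof (exp_pos (-2)). lra.
  - apply RInt_le; [lra | apply ex_RInt_const | |].
    + apply ex_RInt_cont. intros t Ht. apply gamma_integrand_cont.
      rewrite Rmin_left in Ht by lra. lra.
    + intros t Ht. unfold gamma_integrand.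
      assert (1 <= Rpower t a) by (rewrite <- (Rpower_O t) by lra; apply Rle_Rpower; lra).
      assert (exp (-2) <= exp (- t)) by (left; apply exp_increasing; lra).
      pose proof (exp_pos (-2)). nra.
Qed.

Lemma Gamma_pos (x : R) : 1 <= x <= 5 -> 0 < Gamma x.
Proof.
  intros Hx. set (a := x - 1). assert (Ha : 0 <= a <= 4) by (unfold a; lra).
  assert (Hex : forall u v, 0 < u <= v -> ex_RInt (gamma_integrand a) u v)
    by (intros u v Huv; apply ex_RInt_pos; [apply gamma_integrand_cont | exact Huv]).
  destruct (improper_0inf_of_bounded (gamma_integrand a) (gamma_integrand_cont a)
              (fun t _ => gamma_integrand_nonneg a t)) as [v [Hv Hlow]].
  - exists 1. intros e He.
    assert (Hbound : Rabs (RInt (gamma_integrand a) e 1) <= (1 - e) * 1).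
    { apply (is_RInt_abs_le (gamma_integrand a)); [lra | | apply RInt_correct_R, Hex; lra].
      intros t Ht. rewrite Rabs_pos_eq by apply gamma_integrand_nonneg.
      apply gamma_integrand_le_1; lra. }
    pose proof (Rle_abs (RInt (gamma_integrand a) e 1)). lra.
  - exists 65. intros M HM. eapply Rle_trans; [| apply (RInt_pow4_exp_le M HM)].
    apply RInt_le; [lra | apply Hex; lra | |].
    + apply ex_RInt_cont. intros t _. apply ex_derive_cont. auto_derive. auto.
    + intros t Ht. unfold gamma_integrand. apply Rmult_le_compat_r; [left; apply exp_pos |].
      rewrite <- (Rpower_pow 4 t) by lra. apply Rle_Rpower; [lra | simpl; lra].
  - replace (Gamma x) with v.
    + pose proof (RInt_gamma_integrand_1_2_pos a ltac:(lra)). lra.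
    + symmetry. apply the_val_unique; [exact Hv |].
      intros w Hw. eapply improper_0inf_unique; [exact Hw | exact Hv].
Qed.

Definition F64_const : R :=
  Gamma ((5 + 1 + (5 - 1)) / 2) / (Gamma ((5 + 1) / 2) * Gamma ((5 - 1) / 2)).

Lemma F64_const_pos : 0 < F64_const.
Proof.
  unfold F64_const.
  assert (0 < Gamma ((5 + 1 + (5 - 1)) / 2)) by (apply Gamma_pos; lra).
  assert (0 < Gamma ((5 + 1) / 2)) by (apply Gamma_pos; lra).
  assert (0 < Gamma ((5 - 1) / 2)) by (apply Gamma_pos; lra).
  apply Rdiv_lt_0_compat; [| apply Rmult_lt_0_compat]; auto.
Qed.

Lemma p_F_6_4 (s : R) : 0 < s ->
  p_F s (5 + 1) (5 - 1) = F64_const * (27/8 * s^2 / (1 + 3/2 * s)^5).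
Proof.
  intros Hs. unfold p_F, F64_const.
  replace ((5 + 1) / 2) with (INR 3) by (simpl; lra).
  replace (INR 3 - 1) with (INR 2) by (simpl; lra).
  replace (- (5 + 1 + (5 - 1)) / 2) with (- INR 5) by (simpl; lra).
  replace ((5 + 1) / (5 - 1)) with (3/2) by lra.
  replace (1 + (5 + 1) * s / (5 - 1)) with (1 + 3/2 * s) by lra.
  rewrite Rpower_Ropp, !Rpower_pow by lra.
  replace (INR 3) with ((5 + 1) / 2) by (simpl; lra).
  assert (0 < Gamma ((5 + 1) / 2)) by (apply Gamma_pos; lra).
  assert (0 < Gamma ((5 - 1) / 2)) by (apply Gamma_pos; lra).
  assert ((1 + 3/2 * s)^5 <> 0) by (apply pow_nonzero; lra).
  field. repeat split; auto; lra.
Qed.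

(* An antiderivative of the F(6, 4) density (up to [F64_const]), written in
   the variable [V = 3x / (2 + 3x)]; it vanishes at 0. *)
Definition F64_ratio (x : R) : R := 3/2 * x / (1 + 3/2 * x).
Definition F64_primitive (x : R) : R := F64_ratio x ^ 3 / 3 - F64_ratio x ^ 4 / 4.

Lemma F64_primitive_derive (x : R) : 0 <= x ->
  is_derive F64_primitive x (27/8 * x^2 / (1 + 3/2 * x)^5).
Proof. intros Hx. unfold F64_primitive, F64_ratio. auto_derive; [lra | field; lra]. Qed.

Lemma F64_primitive_small (e : R) : 0 <= e <= 1 -> Rabs (F64_primitive e) <= e / 2.
Proof.
  intros He. unfold F64_primitive. set (V := F64_ratio e).
  assert (HVe : V * (1 + 3/2 * e) = 3/2 * e) by (unfold V, F64_ratio; field; lra).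
  assert (HV : 0 <= V <= 1) by (split; nra).
  assert (0 <= V^3) by (apply pow_le; lra).
  assert (V^4 <= V^3) by (simpl; nra).
  assert (0 <= V^4) by (apply pow_le; lra).
  assert (V^3 <= V) by (simpl; nra).
  rewrite Rabs_pos_eq by lra. nra.
Qed.

Lemma F64_improper (x : R) : 0 < x ->
  is_improper_left (fun s => p_F s (5 + 1) (5 - 1)) 0 x (F64_const * F64_primitive x).
Proof.
  intros Hx eps Heps. pose proof F64_const_pos as HK.
  assert (0 < eps / F64_const) by (apply Rdiv_lt_0_compat; auto).
  pose proof (Rmin_l (Rmin x 1) (eps / F64_const)).
  pose proof (Rmin_r (Rmin x 1) (eps / F64_const)).
  pose proof (Rmin_l x 1). pose proof (Rmin_r x 1).
  set (d := Rmin (Rmin x 1) (eps / F64_const)) in *.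
  assert (Hd : 0 < d) by (unfold d; repeat apply Rmin_pos; lra).
  exists d. split; [exact Hd |].
  intros e He. exists (F64_const * F64_primitive x - F64_const * F64_primitive e). split.
  - apply riemann_of_is_RInt. replace (0 + e) with e by ring.
    apply is_RInt_ext_R with (fun s => F64_const * (27/8 * s^2 / (1 + 3/2 * s)^5)).
    { intros t Ht. rewrite Rmin_left in Ht by lra. rewrite p_F_6_4; [auto | lra]. }
    apply (is_RInt_antiderivative (fun s => F64_const * F64_primitive s)).
    + intros t Ht. rewrite Rmin_left in Ht by lra.
      apply (is_derive_scal F64_primitive), F64_primitive_derive. lra.
    + intros t Ht. rewrite Rmin_left in Ht by lra.
      apply ex_derive_cont. auto_derive. change ((1 + 3/2 * t) ^ 5 <> 0). apply pow_nonzero. lra.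
  - replace (F64_const * F64_primitive x - F64_const * F64_primitive e
             - F64_const * F64_primitive x)
      with (- (F64_const * F64_primitive e)) by ring.
    rewrite Rabs_Ropp, Rabs_mult, (Rabs_pos_eq F64_const) by lra.
    pose proof (F64_primitive_small e ltac:(lra)).
    assert (F64_const * e < eps).
    { apply Rmult_lt_reg_r with (/ F64_const); [apply Rinv_0_lt_compat; lra |].
      rewrite Rmult_comm, <- Rmult_assoc, Rinv_l, Rmult_1_l by lra. lra. }
    assert (F64_const * Rabs (F64_primitive e) <= F64_const * (e/2))
      by (apply Rmult_le_compat_l; lra).
    lra.
Qed.

Lemma P_F_6_4 (x : R) : 0 < x -> P_F x (5 + 1) (5 - 1) = F64_const * F64_primitive x.
Proof.
  intros Hx. unfold P_F. destruct (Rlt_dec 0 x) as [_ | Hn]; [| lra].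
  apply the_val_unique; [now apply F64_improper |].
  intros w Hw. eapply improper_left_unique; [exact Hw | now apply F64_improper].
Qed.

Definition t5_const : R := Gamma ((5 + 1) / 2) / (sqrt (5 * PI) * Gamma (5 / 2)).

Lemma t5_const_pos : 0 < t5_const.
Proof.
  unfold t5_const. assert (0 < Gamma ((5 + 1) / 2)) by (apply Gamma_pos; lra).
  assert (0 < Gamma (5 / 2)) by (apply Gamma_pos; lra).
  assert (0 < sqrt (5 * PI)) by (apply sqrt_lt_R0; pose proof PI_RGT_0; lra).
  apply Rdiv_lt_0_compat; [| apply Rmult_lt_0_compat]; auto.
Qed.

Lemma p_t_5 (t : R) : p_t t 5 = t5_const / (1 + t^2/5)^3.
Proof.
  unfold p_t, t5_const. replace (- (5 + 1) / 2) with (- INR 3) by (simpl; lra).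
  rewrite Rpower_Ropp, Rpower_pow; [unfold Rdiv; ring |].
  pose proof (pow2_ge_0 t). lra.
Qed.

Lemma one_minus_sq_pos (r : R) : -1 < r < 1 -> 0 < 1 - r^2.
Proof. intros Hr. assert (0 < (1 - r) * (1 + r)) by (apply Rmult_lt_0_compat; lra). nra. Qed.

Lemma quadratic_pos (r b : R) : -1 < r < 1 -> 0 < b^2 - 2*r*b + 1.
Proof.
  intros Hr. pose proof (one_minus_sq_pos r Hr). pose proof (pow2_ge_0 (b - r)).
  replace (b^2 - 2*r*b + 1) with ((b - r)^2 + (1 - r^2)) by ring. lra.
Qed.

Definition slope_of_t (r t : R) : R := sqrt (1 - r^2) * t / sqrt 5 + r.

Lemma slope_of_t_minus (r : R) : -1 < r < 1 -> slope_of_t r (t_minus 5 r) = 0.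
Proof.
  intros Hr. pose proof (sqrt_lt_R0 _ (one_minus_sq_pos r Hr)).
  assert (0 < sqrt 5) by (apply sqrt_lt_R0; lra).
  unfold slope_of_t, t_minus. field. lra.
Qed.

Lemma slope_of_t_plus (bt r : R) : -1 < r < 1 -> slope_of_t r (t_plus bt 5 r) = bt.
Proof.
  intros Hr. pose proof (sqrt_lt_R0 _ (one_minus_sq_pos r Hr)).
  assert (0 < sqrt 5) by (apply sqrt_lt_R0; lra).
  unfold slope_of_t, t_plus. field. lra.
Qed.

Lemma slope_of_t_lt (r t1 t2 : R) : -1 < r < 1 -> t1 < t2 -> slope_of_t r t1 < slope_of_t r t2.
Proof.
  intros Hr Ht. pose proof (sqrt_lt_R0 _ (one_minus_sq_pos r Hr)).
  assert (0 < sqrt 5) by (apply sqrt_lt_R0; lra).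
  unfold slope_of_t. apply Rplus_lt_compat_r. unfold Rdiv.
  apply Rmult_lt_compat_r; [apply Rinv_0_lt_compat; lra | nra].
Qed.

Lemma t_minus_lt_t_plus (bt r : R) : 0 < bt -> -1 < r < 1 -> t_minus 5 r < t_plus bt 5 r.
Proof.
  intros Hbt Hr. destruct (Rlt_or_le (t_minus 5 r) (t_plus bt 5 r)) as [H | H]; [exact H |].
  destruct (Rle_lt_or_eq_dec _ _ H) as [Hlt | Heq].
  - apply (slope_of_t_lt r) in Hlt; [| exact Hr].
    rewrite slope_of_t_minus, slope_of_t_plus in Hlt; lra.
  - apply (f_equal (slope_of_t r)) in Heq.
    rewrite slope_of_t_minus, slope_of_t_plus in Heq; lra.
Qed.

Lemma slope_of_t_range (bt r t : R) : -1 < r < 1 ->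
  t_minus 5 r <= t <= t_plus bt 5 r -> 0 <= slope_of_t r t <= bt.
Proof.
  intros Hr [H1 H2]. rewrite <- (slope_of_t_minus r Hr), <- (slope_of_t_plus bt r Hr).
  split; [destruct H1 as [H1 | <-] | destruct H2 as [H2 | ->]];
    solve [lra | left; now apply slope_of_t_lt].
Qed.

(* In the slope variable the integrand of [I bt 5 r] becomes the rational function
   [1 / (3 M^3) - E / (4 M^4)] with [M = bt^2 + 1 - 2 r v], [E = 1 - 2 r v + v^2]. *)
Definition slope_integrand (bt r v : R) : R :=
  1 / (3 * (bt^2 + 1 - 2*r*v)^3) - (1 - 2*r*v + v^2) / (4 * (bt^2 + 1 - 2*r*v)^4).

Lemma slope_denominator_pos (bt r v : R) : 0 < bt -> -1 < r < 1 -> 0 <= v <= bt ->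
  0 < bt^2 + 1 - 2*r*v.
Proof.
  intros Hbt Hr Hv. pose proof (one_minus_sq_pos r Hr).
  apply Rmult_lt_reg_l with bt; [exact Hbt |].
  replace (bt * (bt ^ 2 + 1 - 2 * r * v))
    with ((bt - v) * (bt^2 + 1) + v * ((bt - r)^2 + (1 - r^2))) by ring.
  pose proof (pow2_ge_0 (bt - r)). pose proof (pow2_ge_0 bt).
  destruct (Req_dec v 0) as [-> | Hv0]; nra.
Qed.

Lemma sq_div_sqrt5 (x s : R) : 0 < s -> (sqrt 5 * x / s)^2 = 5 * x^2 / s^2.
Proof.
  intros Hs. rewrite <- (pow2_sqrt 5) at 2 by lra. field. lra.
Qed.

(* Pointwise identity: at [v = slope_of_t r t] the F argument is
   [2 E / (3 (bt^2 - v^2))], and the t and F densities collapse to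
   [slope_integrand] up to a constant. *)
Lemma Ifun_integrand_eq (bt r t : R) : -1 < r < 1 -> 0 < slope_of_t r t < bt ->
  p_t t 5 * P_F (Ffun t bt 5 r) (5 + 1) (5 - 1) =
  t5_const * F64_const * sqrt (1 - r^2) ^ 6 * slope_integrand bt r (slope_of_t r t).
Proof.
  intros Hr Hv. pose proof (one_minus_sq_pos r Hr).
  set (s := sqrt (1 - r^2)). set (q := sqrt 5).
  assert (Hs : 0 < s) by (apply sqrt_lt_R0; lra).
  assert (Hs2 : s^2 = 1 - r^2) by (apply pow2_sqrt; lra).
  assert (Hq : 0 < q) by (apply sqrt_lt_R0; lra).
  set (v := slope_of_t r t) in *.
  assert (Ht : t = q * (v - r) / s) by (unfold v, slope_of_t; fold s q; field; lra).
  set (E := 1 - 2*r*v + v^2).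
  assert (HE : E = s^2 + (v - r)^2) by (unfold E; rewrite Hs2; ring).
  assert (HEpos : 0 < E) by (rewrite HE; pose proof (pow2_ge_0 (v - r)); nra).
  assert (Hdensity : 1 + t^2/5 = E / s^2)
    by (rewrite HE, Ht, sq_div_sqrt5 by lra; field; lra).
  assert (Hwidth : (t_plus bt 5 r - t_minus 5 r) ^ 2 - (t - t_minus 5 r) ^ 2
                   = 5 * (bt^2 - v^2) / s^2).
  { unfold t_plus, t_minus. fold s q.
    replace (q * (bt - r) / s - - q * r / s) with (q * bt / s) by (field; lra).
    replace (t - - q * r / s) with (q * v / s) by (rewrite Ht; field; lra).
    rewrite !sq_div_sqrt5 by lra. field. lra. }
  assert (HF : Ffun t bt 5 r = 2/3 * E / (bt^2 - v^2)).
  { unfold Ffun. rewrite Hwidth.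
    replace (5 + t^2) with (5 * (1 + t^2/5)) by field. rewrite Hdensity.
    field. split; [nra | lra]. }
  rewrite HF, P_F_6_4, p_t_5, Hdensity by (apply Rdiv_lt_0_compat; nra).
  unfold F64_primitive, F64_ratio, slope_integrand. fold E.
  replace (bt ^ 2 + 1 - 2 * r * v) with (bt^2 - v^2 + E) by (unfold E; ring).
  assert (0 < bt^2 - v^2) by nra.
  clearbody E s. field. repeat split; lra.
Qed.

(* A rational primitive of [slope_integrand] in [v], vanishing at [v = 0]:
   with [m = bt^2 + 1] it is [slope_poly m r v / (m - 2 r v)^3]. *)
Definition slope_poly (m r v : R) : R :=
  v * ((4*m - 3) / (12*m) + (-2*r) * (3*m - 2) / (8*m^2) * v
       + (4*r^2*(3*m - 2) - 2*m^2) / (24*m^3) * v^2).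

Definition slope_primitive (bt r v : R) : R :=
  slope_poly (bt^2 + 1) r v / (bt^2 + 1 - 2*r*v)^3.

Lemma slope_poly_derive (m r v : R) : 0 < m -> m - 2*r*v <> 0 ->
  is_derive (fun v => slope_poly m r v / (m - 2*r*v)^3) v
    (1 / (3 * (m - 2*r*v)^3) - (1 - 2*r*v + v^2) / (4 * (m - 2*r*v)^4)).
Proof.
  intros Hm Hmv. unfold slope_poly. auto_derive.
  - nonzero.
  - field. split; lra.
Qed.

Lemma slope_primitive_derive (bt r v : R) : bt^2 + 1 - 2*r*v <> 0 ->
  is_derive (slope_primitive bt r) v (slope_integrand bt r v).
Proof.
  intros Hmv. apply slope_poly_derive; [pose proof (pow2_ge_0 bt); lra | exact Hmv].
Qed.

Definition I_closed (bt r : R) : R :=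
  t5_const * F64_const * sqrt 5 * sqrt (1 - r^2) ^ 5 * slope_primitive bt r bt.

Lemma Ifun_closed (bt r : R) : 0 < bt -> -1 < r < 1 -> Ifun bt 5 r = I_closed bt r.
Proof.
  intros Hbt Hr. pose proof (one_minus_sq_pos r Hr).
  assert (Hs : 0 < sqrt (1 - r^2)) by (apply sqrt_lt_R0; lra).
  assert (Hq : 0 < sqrt 5) by (apply sqrt_lt_R0; lra).
  pose proof (t_minus_lt_t_plus bt r Hbt Hr) as Hlt.
  set (K := t5_const * F64_const * sqrt (1 - r^2) ^ 6).
  unfold Ifun. apply riemann_RInt_eq.
  apply is_RInt_ext_R with (fun t => K * slope_integrand bt r (slope_of_t r t)).
  { intros t Ht. rewrite Rmin_left, Rmax_right in Ht by lra.
    symmetry. apply Ifun_integrand_eq; [exact Hr |].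
    rewrite <- (slope_of_t_minus r Hr), <- (slope_of_t_plus bt r Hr).
    split; apply slope_of_t_lt; lra. }
  set (T := fun t => K * (sqrt 5 / sqrt (1 - r^2)) * slope_primitive bt r (slope_of_t r t)).
  replace (I_closed bt r) with (T (t_plus bt 5 r) - T (t_minus 5 r)).
  2: { unfold T, I_closed. rewrite slope_of_t_minus, slope_of_t_plus by exact Hr.
       unfold slope_primitive, slope_poly, K.
       pose proof (slope_denominator_pos bt r bt Hbt Hr ltac:(lra)).
       pose proof (pow2_ge_0 bt). field. repeat split; lra. }
  apply is_RInt_antiderivative.
  - intros t Ht. rewrite Rmin_left, Rmax_right in Ht by lra.
    pose proof (slope_denominator_pos bt r _ Hbt Hr (slope_of_t_range bt r t Hr Ht)).
    unfold T. replace (K * slope_integrand bt r (slope_of_t r t))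
      with (K * (sqrt 5 / sqrt (1 - r^2)) *
            (sqrt (1 - r^2) / sqrt 5 * slope_integrand bt r (slope_of_t r t)))
      by (field; lra).
    apply is_derive_scal, (is_derive_comp (slope_primitive bt r) (slope_of_t r)).
    + apply slope_primitive_derive. lra.
    + unfold slope_of_t.
      auto_derive; [auto | replace (r * (r * 1)) with (r ^ 2) by ring; field; lra].
  - intros t Ht. rewrite Rmin_left, Rmax_right in Ht by lra.
    pose proof (slope_denominator_pos bt r _ Hbt Hr (slope_of_t_range bt r t Hr Ht)).
    apply (continuous_comp (slope_of_t r) (fun v => K * slope_integrand bt r v)).
    + apply ex_derive_cont. unfold slope_of_t. auto_derive. auto.
    + set (v := slope_of_t r t) in *. apply ex_derive_cont. unfold slope_integrand.
      auto_derive. repeat split; nonzero.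
Qed.

Lemma slope_primitive_inversion (bt r : R) : 0 < bt -> -1 < r < 1 ->
  slope_primitive bt r bt + slope_primitive (1/bt) r (1/bt) =
  / 12 * (bt * (bt^2 - r*bt + 1) / (bt^2 - 2*r*bt + 1)^2).
Proof.
  intros Hb Hr. pose proof (quadratic_pos r bt Hr). pose proof (pow2_ge_0 bt).
  unfold slope_primitive, slope_poly.
  replace ((1/bt)^2 + 1 - 2*r*(1/bt)) with ((bt^2 - 2*r*bt + 1) / bt^2) by (field; lra).
  replace (bt^2 + 1 - 2*r*bt) with (bt^2 - 2*r*bt + 1) by ring.
  field. repeat split; try lra; nra.
Qed.

Definition J_const (r : R) : R :=
  t5_const * F64_const * sqrt 5 * sqrt (1 - r^2) ^ 5 / 12.

Definition posterior_shape (r b : R) : R :=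
  Rabs b * (b^2 - r*b + 1) / (b^2 - 2*r*b + 1)^2.

Lemma J_const_pos (r : R) : -1 < r < 1 -> 0 < J_const r.
Proof.
  intros Hr. unfold J_const. pose proof t5_const_pos. pose proof F64_const_pos.
  assert (0 < sqrt 5) by (apply sqrt_lt_R0; lra).
  assert (0 < sqrt (1 - r^2) ^ 5) by (apply pow_lt; apply sqrt_lt_R0; now apply one_minus_sq_pos).
  assert (0 < t5_const * F64_const * sqrt 5 * sqrt (1 - r^2) ^ 5)
    by (apply Rmult_lt_0_compat; [apply Rmult_lt_0_compat; [apply Rmult_lt_0_compat |] |]; auto).
  lra.
Qed.

Lemma sgn_cases (b : R) : b <> 0 ->
  (0 < b /\ sgn b = 1 /\ Rabs b = b) \/ (b < 0 /\ sgn b = -1 /\ Rabs b = - b).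
Proof.
  intros Hb. unfold sgn. destruct (Rlt_dec 0 b).
  - left. repeat split; auto. apply Rabs_pos_eq; lra.
  - destruct (Rlt_dec b 0); [| lra]. right. repeat split; auto. apply Rabs_left; auto.
Qed.

Lemma Jfun_closed (r b : R) : -1 < r < 1 -> b <> 0 ->
  Jfun b 5 r 1 = J_const r * posterior_shape r b.
Proof.
  intros Hr Hb. unfold Jfun.
  set (rs := r * sgn b). set (B := Rabs b).
  assert (Hrs : -1 < rs < 1 /\ rs^2 = r^2 /\ rs * B = r * b /\ B^2 = b^2 /\ 0 < B).
  { unfold rs, B.
    destruct (sgn_cases b Hb) as [[H1 [-> ->]] | [H1 [-> ->]]]; repeat split; lra || ring. }
  destruct Hrs as [Hrs [Hrs2 [HrB [HB2 HB]]]].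
  replace (B / 1) with B by field.
  rewrite !Ifun_closed by (try apply Rdiv_lt_0_compat; lra).
  unfold I_closed, J_const, posterior_shape. rewrite Hrs2.
  transitivity (t5_const * F64_const * sqrt 5 * sqrt (1 - r ^ 2) ^ 5 *
    (slope_primitive B rs B + slope_primitive (1 / B) rs (1 / B))); [ring |].
  rewrite slope_primitive_inversion by assumption. fold B.
  replace (B * (B^2 - rs*B + 1)) with (B * (b^2 - r*b + 1)) by nra.
  replace (B^2 - 2*rs*B + 1) with (b^2 - 2*r*b + 1) by nra.
  unfold Rdiv. ring.
Qed.

Definition slope_kernel (r b : R) : R :=
  b * (b^2 - r*b + 1) / ((1 + b^2) * (b^2 - 2*r*b + 1)^2).

Lemma posterior_numerator_pos (r x : R) : -1 < r < 1 -> 0 < x ->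
  p_C x * Jfun x 5 r 1 = J_const r / PI * slope_kernel r x.
Proof.
  intros Hr Hx. rewrite Jfun_closed by lra. unfold p_C, posterior_shape, slope_kernel.
  rewrite Rabs_pos_eq by lra. pose proof PI_RGT_0. pose proof (quadratic_pos r x Hr).
  pose proof (pow2_ge_0 x). field. repeat split; lra.
Qed.

Lemma posterior_numerator_neg (r x : R) : -1 < r < 1 -> x < 0 ->
  p_C x * Jfun x 5 r 1 = J_const r / PI * slope_kernel (- r) (- x).
Proof.
  intros Hr Hx. rewrite Jfun_closed by lra. unfold p_C, posterior_shape, slope_kernel.
  rewrite Rabs_left by lra. pose proof PI_RGT_0. pose proof (quadratic_pos r x Hr).
  replace ((- x)^2 - 2 * - r * - x + 1) with (x^2 - 2*r*x + 1) by ring.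
  pose proof (pow2_ge_0 x). field. repeat split; lra.
Qed.

Lemma slope_kernel_cont (r b : R) : -1 < r < 1 -> continuous (slope_kernel r) b.
Proof.
  intros Hr. pose proof (quadratic_pos r b Hr). pose proof (pow2_ge_0 b).
  apply ex_derive_cont. unfold slope_kernel. auto_derive. nonzero.
Qed.

Lemma ex_RInt_slope_kernel (r a b : R) : -1 < r < 1 -> ex_RInt (slope_kernel r) a b.
Proof. intros Hr. apply ex_RInt_cont. intros. now apply slope_kernel_cont. Qed.

Lemma slope_kernel_inversion (r y : R) : -1 < r < 1 -> 0 < y ->
  slope_kernel r (1/y) / y^2 = slope_kernel r y.
Proof.
  intros Hr Hy. pose proof (quadratic_pos r y Hr). pose proof (pow2_ge_0 y).
  unfold slope_kernel. field. repeat split; try lra; nra.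
Qed.

Definition sym_kernel (r b : R) : R := slope_kernel r b + slope_kernel (- r) b.

Lemma ex_RInt_sym_kernel (r a b : R) : -1 < r < 1 -> ex_RInt (sym_kernel r) a b.
Proof.
  intros Hr. apply ex_RInt_cont. intros z _. apply (continuous_plus (V := R_NormedModule));
    apply slope_kernel_cont; lra.
Qed.

(* The Euler-type integral representation [2F1(2,1;3/2;r^2) = int_0^1 du / W^2]
   with [W = 1 - r^2 (1 - u^2)]. *)
Definition hyp_weight (r u : R) : R := 1 - r^2 * (1 - u^2).
Definition hyp_integral (r : R) : R := RInt (fun u => 1 / hyp_weight r u ^ 2) 0 1.

Lemma hyp_weight_pos (r u : R) : -1 < r < 1 -> 0 < hyp_weight r u.
Proof.
  intros Hr. pose proof (one_minus_sq_pos r Hr). pose proof (pow2_ge_0 u).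
  pose proof (pow2_ge_0 r). unfold hyp_weight. nra.
Qed.

Lemma ex_RInt_hyp (r a b : R) : -1 < r < 1 -> ex_RInt (fun u => 1 / hyp_weight r u ^ 2) a b.
Proof.
  intros Hr. apply ex_RInt_cont. intros z _. pose proof (hyp_weight_pos r z Hr).
  apply ex_derive_cont. unfold hyp_weight in *. auto_derive. nonzero.
Qed.

Lemma sym_kernel_subst (r b : R) : -1 < r < 1 ->
  (-4*b / (1 + b^2)^2) * (1 / hyp_weight r ((1 - b^2) / (1 + b^2)) ^ 2)
  = - 2 * sym_kernel r b.
Proof.
  intros Hr. pose proof (quadratic_pos r b Hr) as Q1.
  pose proof (quadratic_pos (- r) b ltac:(lra)) as Q2. pose proof (pow2_ge_0 b).
  replace (hyp_weight r ((1 - b^2) / (1 + b^2)))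
    with ((b^2 - 2*r*b + 1) * (b^2 + 2*r*b + 1) / (1 + b^2)^2)
    by (unfold hyp_weight; field; lra).
  unfold sym_kernel, slope_kernel.
  replace (b^2 - 2 * - r * b + 1) with (b^2 + 2*r*b + 1) in * by ring.
  field. repeat split; try lra; nra.
Qed.

Lemma RInt_sym_kernel_0_1 (r : R) : -1 < r < 1 -> RInt (sym_kernel r) 0 1 = hyp_integral r / 2.
Proof.
  intros Hr.
  assert (Hsub : is_RInt (fun b => -4*b / (1 + b^2)^2 *
                                    (1 / hyp_weight r ((1 - b^2) / (1 + b^2)) ^ 2))
                   0 1 (RInt (fun u => 1 / hyp_weight r u ^ 2) 1 0)).
  { pose proof (is_RInt_subst (fun u => 1 / hyp_weight r u ^ 2)
                  (fun b => (1 - b^2) / (1 + b^2)) (fun b => -4*b / (1 + b^2)^2) 0 1) as Hs.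
    assert (E0 : (1 - 0^2) / (1 + 0^2) = 1) by field.
    assert (E1 : (1 - 1^2) / (1 + 1^2) = 0) by field.
    cbv beta in Hs. rewrite E0, E1 in Hs. apply Hs.
    - intros x _. pose proof (hyp_weight_pos r ((1 - x^2) / (1 + x^2)) Hr).
      pose proof (pow2_ge_0 x).
      apply ex_derive_cont. unfold hyp_weight in *. auto_derive. repeat split; nonzero.
    - intros x _. pose proof (pow2_ge_0 x). split.
      + auto_derive; [lra | field; lra].
      + apply ex_derive_cont. auto_derive. nonzero. }
  rewrite RInt_swap_R in Hsub by now apply ex_RInt_hyp. fold (hyp_integral r) in Hsub.
  assert (Hint : is_RInt (fun b => -2 * sym_kernel r b) 0 1 (- hyp_integral r)).
  { apply is_RInt_ext_R with (2 := Hsub).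
    intros x _. now apply sym_kernel_subst. }
  pose proof (is_RInt_scal_R _ 0 1 (-2) _ (RInt_correct_R _ _ _ (ex_RInt_sym_kernel r 0 1 Hr))).
  pose proof (is_RInt_uniq_R _ _ _ _ _ Hint H). lra.
Qed.

Lemma RInt_sym_kernel_inversion (r M : R) : -1 < r < 1 -> 1 <= M ->
  RInt (sym_kernel r) 1 M = RInt (sym_kernel r) (1/M) 1.
Proof.
  intros Hr HM.
  assert (HiM : 0 < 1/M <= 1)
    by (split; [apply Rdiv_lt_0_compat | apply Rmult_le_reg_r with M; [| field_simplify]]; lra).
  pose proof (is_RInt_subst (sym_kernel r) (fun y => 1/y) (fun y => -1/y^2) (1/M) 1) as Hs.
  cbv beta in Hs. replace (1 / (1 / M)) with M in Hs by (field; lra).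
  replace (1/1) with 1 in Hs by field.
  assert (Hsub : is_RInt (fun y => -1 / y^2 * sym_kernel r (1/y)) (1/M) 1
                   (RInt (sym_kernel r) M 1)).
  { apply Hs.
    - intros. apply (continuous_plus (V := R_NormedModule)); apply slope_kernel_cont; lra.
    - intros x Hx. rewrite Rmin_left, Rmax_right in Hx by lra. split.
      + auto_derive; [lra | field; lra].
      + apply ex_derive_cont. auto_derive. nonzero. }
  assert (Hneg : is_RInt (fun y => -1 * sym_kernel r y) (1/M) 1 (RInt (sym_kernel r) M 1)).
  { apply is_RInt_ext_R with (2 := Hsub). intros x Hx.
    rewrite Rmin_left, Rmax_right in Hx by lra. unfold sym_kernel.
    rewrite <- (slope_kernel_inversion r x), <- (slope_kernel_inversion (- r) x) by lra.
    field. lra. }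
  pose proof (is_RInt_scal_R _ _ _ (-1) _ (RInt_correct_R _ _ _ (ex_RInt_sym_kernel r (1/M) 1 Hr))).
  pose proof (is_RInt_uniq_R _ _ _ _ _ Hneg H).
  rewrite RInt_swap_R in H0 by now apply ex_RInt_sym_kernel. lra.
Qed.

Lemma slope_kernel_bound (r x : R) : -1 < r < 1 -> 0 <= x <= 1 ->
  0 <= slope_kernel r x <= 3 / (1 - r^2)^2.
Proof.
  intros Hr Hx. pose proof (one_minus_sq_pos r Hr).
  set (Q := x^2 - 2*r*x + 1).
  assert (HQ : 1 - r^2 <= Q)
    by (unfold Q; pose proof (pow2_ge_0 (x - r));
        replace (x^2 - 2*r*x + 1) with ((x - r)^2 + (1 - r^2)) by ring; lra).
  assert (HN1 : 0 <= x^2 - r*x + 1) by nra.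
  assert (HN2 : x * (x^2 - r*x + 1) <= 3) by nra.
  assert (HD : (1 - r^2)^2 <= (1 + x^2) * Q^2).
  { assert ((1 - r^2)^2 <= Q^2) by (apply pow_incr; lra).
    pose proof (pow2_ge_0 x). pose proof (pow2_ge_0 Q). nra. }
  assert (0 < (1 - r^2)^2) by (apply pow_lt; lra).
  unfold slope_kernel. fold Q. split.
  - apply Rdiv_le_0_compat; nra.
  - unfold Rdiv. apply Rmult_le_compat; [nra | left; apply Rinv_0_lt_compat; lra | lra |].
    apply Rinv_le_contravar; lra.
Qed.

Lemma RInt_sym_kernel_small (r e : R) : -1 < r < 1 -> 0 < e <= 1 ->
  Rabs (RInt (sym_kernel r) 0 e) <= e * (6 / (1 - r^2)^2).
Proof.
  intros Hr He. replace e with (e - 0) at 2 by ring.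
  apply abs_RInt_le_const; [lra | now apply ex_RInt_sym_kernel |].
  intros t Ht. pose proof (slope_kernel_bound r t Hr ltac:(lra)).
  pose proof (slope_kernel_bound (- r) t ltac:(lra) ltac:(lra)).
  replace ((- r)^2) with (r^2) in H0 by ring.
  unfold sym_kernel. rewrite Rabs_pos_eq by lra. lra.
Qed.

(* Truncating the half-line integral at [e] and [M] loses the pieces near 0 and
   (after inversion) near [+oo]. *)
Lemma RInt_sym_kernel_truncated (r e M : R) : -1 < r < 1 -> 1 <= M ->
  RInt (sym_kernel r) e M
  = hyp_integral r - RInt (sym_kernel r) 0 e - RInt (sym_kernel r) 0 (1/M).
Proof.
  intros Hr HM.
  pose proof (RInt_sym_kernel_0_1 r Hr) as Hhalf_e.
  pose proof (RInt_sym_kernel_0_1 r Hr) as Hhalf_M.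
  rewrite <- (RInt_Chasles_R _ e 1 M), RInt_sym_kernel_inversion
    by (auto; now apply ex_RInt_sym_kernel).
  rewrite <- (RInt_Chasles_R _ 0 e 1) in Hhalf_e by now apply ex_RInt_sym_kernel.
  rewrite <- (RInt_Chasles_R _ 0 (1/M) 1) in Hhalf_M by now apply ex_RInt_sym_kernel.
  lra.
Qed.

Lemma posterior_numerator_integrals (r e M : R) : -1 < r < 1 -> 0 < e <= M ->
  Defs.is_RInt (fun x => p_C x * Jfun x 5 r 1) (- M) (- e)
    (J_const r / PI * RInt (slope_kernel (- r)) e M) /\
  Defs.is_RInt (fun x => p_C x * Jfun x 5 r 1) e M
    (J_const r / PI * RInt (slope_kernel r) e M).
Proof.
  intros Hr He. split; apply riemann_of_is_RInt.
  - pose proof (is_RInt_reflect _ _ _ _ (is_RInt_scal_R _ _ _ (J_const r / PI) _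
      (RInt_correct_R _ _ _ (ex_RInt_slope_kernel (- r) e M ltac:(lra))))) as H.
    apply is_RInt_ext_R with (2 := H). intros x Hx.
    rewrite Rmin_left, Rmax_right in Hx by lra.
    rewrite posterior_numerator_neg by lra. reflexivity.
  - pose proof (is_RInt_scal_R _ _ _ (J_const r / PI) _
      (RInt_correct_R _ _ _ (ex_RInt_slope_kernel r e M Hr))) as H.
    apply is_RInt_ext_R with (2 := H). intros x Hx.
    rewrite Rmin_left, Rmax_right in Hx by lra.
    rewrite posterior_numerator_pos by lra. reflexivity.
Qed.

Lemma truncation_error (r e M : R) : -1 < r < 1 -> 0 < e <= 1 -> 1 <= M ->
  Rabs (RInt (slope_kernel (- r)) e M + RInt (slope_kernel r) e M - hyp_integral r)
  <= (e + 1/M) * (6 / (1 - r^2)^2).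
Proof.
  intros Hr He HM.
  assert (HiM : 0 < 1/M <= 1)
    by (split; [apply Rdiv_lt_0_compat | apply Rmult_le_reg_r with M; [| field_simplify]]; lra).
  assert (Hsum : RInt (slope_kernel (- r)) e M + RInt (slope_kernel r) e M
                 = RInt (sym_kernel r) e M).
  { rewrite Rplus_comm. symmetry. apply RInt_unique_R. unfold sym_kernel.
    apply is_RInt_plus_R; apply RInt_correct_R, ex_RInt_slope_kernel; lra. }
  rewrite Hsum, RInt_sym_kernel_truncated by lra.
  pose proof (RInt_sym_kernel_small r e Hr He).
  pose proof (RInt_sym_kernel_small r (1/M) Hr HiM).
  replace (hyp_integral r - RInt (sym_kernel r) 0 e - RInt (sym_kernel r) 0 (1/M) - hyp_integral r)
    with (- (RInt (sym_kernel r) 0 e + RInt (sym_kernel r) 0 (1/M))) by ring.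
  rewrite Rabs_Ropp. eapply Rle_trans; [apply Rabs_triang |]. lra.
Qed.

Lemma normalising_integral (r : R) : -1 < r < 1 ->
  is_improper_R (fun x => p_C x * Jfun x 5 r 1) (J_const r / PI * hyp_integral r).
Proof.
  intros Hr eps Heps. set (k := J_const r / PI). set (B := 6 / (1 - r^2)^2).
  assert (Hk : 0 < k) by (apply Rdiv_lt_0_compat; [now apply J_const_pos | apply PI_RGT_0]).
  assert (HB : 0 < B)
    by (apply Rdiv_lt_0_compat; [lra | apply pow_lt, one_minus_sq_pos, Hr]).
  set (eta := eps / (2 * (k * B + 1))).
  assert (Heta : 0 < eta) by (apply Rdiv_lt_0_compat; [lra | nra]).
  assert (Hsmall : k * B * (2 * eta) < eps).
  { unfold eta. replace (k * B * (2 * (eps / (2 * (k * B + 1))))) with (eps * (k * B / (k * B + 1)))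
      by (field; nra).
    assert (k * B / (k * B + 1) < 1)
      by (apply Rmult_lt_reg_r with (k * B + 1); [nra | field_simplify; nra]).
    nra. }
  pose proof (Rmin_l (1/2) eta). pose proof (Rmin_r (1/2) eta).
  pose proof (Rmax_l 2 (1/eta)). pose proof (Rmax_r 2 (1/eta)).
  exists (Rmin (1/2) eta), (Rmax 2 (1/eta)). split; [apply Rmin_pos; lra |].
  intros e M He HM.
  assert (HiM : 1/M < eta).
  { unfold Rdiv in *. rewrite !Rmult_1_l in *.
    rewrite <- (Rinv_inv eta). apply Rinv_lt_contravar; [| lra].
    apply Rmult_lt_0_compat; [apply Rinv_0_lt_compat |]; lra. }
  destruct (posterior_numerator_integrals r e M Hr ltac:(lra)) as [Hneg Hpos].
  exists (k * RInt (slope_kernel (- r)) e M), (k * RInt (slope_kernel r) e M).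
  split; [exact Hneg | split; [exact Hpos |]].
  pose proof (truncation_error r e M Hr ltac:(lra) ltac:(lra)) as Herr.
  change (6 / (1 - r^2)^2) with B in Herr.
  replace (k * RInt (slope_kernel (- r)) e M + k * RInt (slope_kernel r) e M - k * hyp_integral r)
    with (k * (RInt (slope_kernel (- r)) e M + RInt (slope_kernel r) e M - hyp_integral r))
    by ring.
  rewrite Rabs_mult, (Rabs_pos_eq k) by lra.
  apply Rle_lt_trans with (k * ((e + 1/M) * B)); [apply Rmult_le_compat_l; lra |].
  eapply Rle_lt_trans; [| exact Hsmall].
  assert (0 < k * B) by nra. assert (e + 1/M < 2 * eta) by lra. nra.
Qed.

(* [(n + 1) z^n -> 0] for [0 <= z < 1]: by d'Alembert's test the series
   [sum (n + 1) w^n] converges for [0 < w < 1], so its terms vanish. *)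
Lemma lim_succ_mul_pow_pos (w : R) : 0 < w < 1 -> is_lim_seq (fun n => INR (S n) * w^n) 0.
Proof.
  intros Hw.
  assert (Hnz : forall n, INR (S n) * w^n <> 0)
    by (intros n; apply Rmult_integral_contrapositive_currified;
        [apply not_0_INR; lia | apply pow_nonzero; lra]).
  assert (Hinv : is_lim_seq (fun n => / INR (S n)) 0).
  { pose proof (is_lim_seq_incr_1 INR p_infty) as [Hinc _].
    pose proof (is_lim_seq_inv _ _ (Hinc is_lim_seq_INR) ltac:(discriminate)) as H.
    exact H. }
  assert (Hratio : is_lim_seq (fun n => Rabs (INR (S (S n)) * w^(S n) / (INR (S n) * w^n))) w).
  { apply is_lim_seq_ext with (fun n => w * (1 + / INR (S n))).
    - intros n. pose proof (pos_INR n). rewrite Rabs_pos_eq.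
      + rewrite <- tech_pow_Rmult, !S_INR. field. split; [apply pow_nonzero |]; lra.
      + apply Rdiv_le_0_compat; [apply Rmult_le_pos; [apply pos_INR | apply pow_le; lra] |].
        apply Rmult_lt_0_compat; [apply lt_0_INR; lia | apply pow_lt; lra].
    - assert (H : is_lim_seq (fun n => w * (1 + / INR (S n))) (w * (1 + 0))).
      { apply is_lim_seq_mult'; [apply is_lim_seq_const |].
        apply is_lim_seq_plus'; [apply is_lim_seq_const | exact Hinv]. }
      rewrite Rplus_0_r, Rmult_1_r in H. exact H. }
  pose proof (ex_series_lim_0 _ (ex_series_DAlembert _ w ltac:(lra) Hnz Hratio)) as Hlim.
  apply is_lim_seq_ext with (2 := Hlim). intros n. apply Rabs_pos_eq.
  apply Rmult_le_pos; [apply pos_INR | apply pow_le; lra].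
Qed.

(* The case [z = 0] is reduced to [w = (1 + z) / 2] by comparison. *)
Lemma lim_succ_mul_pow (z : R) : 0 <= z < 1 -> is_lim_seq (fun n => INR (S n) * z^n) 0.
Proof.
  intros Hz. set (w := (1 + z) / 2).
  apply is_lim_seq_le_le with (fun _ => 0) (fun n => INR (S n) * w^n).
  - intros n. split; [apply Rmult_le_pos; [apply pos_INR | apply pow_le; lra] |].
    apply Rmult_le_compat_l; [apply pos_INR | apply pow_incr; unfold w; lra].
  - apply is_lim_seq_const.
  - apply lim_succ_mul_pow_pos. unfold w; lra.
Qed.

Definition wallis (n : nat) : R := RInt (fun u => (1 - u^2)^n) 0 1.

Lemma ex_RInt_wallis (n : nat) (a b : R) : ex_RInt (fun u => (1 - u^2)^n) a b.
Proof. apply ex_RInt_cont. intros z _. apply ex_derive_cont. auto_derive. auto. Qed.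

Lemma wallis_rec (n : nat) : (2 * INR n + 3) * wallis (S n) = (2 * INR n + 2) * wallis n.
Proof.
  set (f := fun u => (2 * INR n + 3) * (1 - u^2)^(S n) + (- (2 * INR n + 2)) * (1 - u^2)^n).
  assert (H1 : is_RInt f 0 1 ((2 * INR n + 3) * wallis (S n) + (- (2 * INR n + 2)) * wallis n)).
  { apply is_RInt_plus_R; apply is_RInt_scal_R, RInt_correct_R, ex_RInt_wallis. }
  assert (H2 : is_RInt f 0 1 (1 * (1 - 1^2)^(S n) - 0 * (1 - 0^2)^(S n))).
  { apply (is_RInt_antiderivative (fun u => u * (1 - u^2)^(S n))).
    - intros x _. unfold f. auto_derive; [auto |].
      change (match n with 0%nat => 1 | S _ => INR n + 1 end) with (INR (S n)).
      rewrite S_INR. simpl pow.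
      replace (1 - x * (x * 1)) with (1 + - (x * (x * 1))) by ring. ring.
    - intros x _. apply ex_derive_cont. unfold f. auto_derive. auto. }
  pose proof (is_RInt_uniq_R _ _ _ _ _ H1 H2) as H.
  replace (1 - 1^2) with 0 in H by ring. rewrite pow_i in H by lia. lra.
Qed.

Definition hyp_coef (n : nat) : R :=
  poch 2 n * poch 1 n / (poch (3/2) n * INR (Factorial.fact n)).

Lemma poch_pos (a : R) (n : nat) : 0 < a -> 0 < poch a n.
Proof.
  intros Ha. induction n; simpl; [lra |].
  apply Rmult_lt_0_compat; [exact IHn | pose proof (pos_INR n); lra].
Qed.

Lemma hyp_coef_wallis (n : nat) : hyp_coef n = INR (S n) * wallis n.
Proof.
  induction n as [| n IH].
  - unfold hyp_coef, wallis. simpl. rewrite RInt_const.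
    unfold scal; simpl; unfold mult; simpl. field.
  - assert (Hstep : hyp_coef (S n)
                    = hyp_coef n * ((2 + INR n) * (1 + INR n)) / ((3/2 + INR n) * INR (S n))).
    { unfold hyp_coef. simpl poch.
      change (Factorial.fact (S n)) with (S n * Factorial.fact n)%nat. rewrite mult_INR.
      pose proof (poch_pos (3/2) n ltac:(lra)). pose proof (INR_fact_lt_0 n).
      pose proof (pos_INR n). rewrite S_INR. field. repeat split; lra. }
    rewrite Hstep, IH. pose proof (wallis_rec n). pose proof (pos_INR n).
    rewrite !S_INR.
    apply Rmult_eq_reg_r with ((3/2 + INR n) * (INR n + 1) * 2); [| nra].
    field_simplify; [nra | lra].
Qed.

(* Termwise integration of [1 / (1 - x)^2 = sum (n + 1) x^n] at [x = z (1 - u^2)]. *)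
Lemma is_RInt_hyp_term (n : nat) (z : R) :
  is_RInt (fun u => INR (S n) * (z * (1 - u^2))^n) 0 1 (hyp_coef n * z^n).
Proof.
  rewrite hyp_coef_wallis.
  replace (INR (S n) * wallis n * z ^ n) with ((INR (S n) * z^n) * wallis n) by ring.
  apply is_RInt_ext_R with (fun u => (INR (S n) * z^n) * (1 - u^2)^n).
  - intros x _. rewrite Rpow_mult_distr. ring.
  - apply is_RInt_scal_R, RInt_correct_R, ex_RInt_wallis.
Qed.

Lemma is_RInt_hyp_partial_sum (N : nat) (z : R) :
  is_RInt (fun u => sum_f_R0 (fun n => INR (S n) * (z * (1 - u^2))^n) N) 0 1
    (sum_f_R0 (fun n => hyp_coef n * z^n) N).
Proof.
  induction N as [| N IH]; [exact (is_RInt_hyp_term 0 z) |].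
  rewrite tech5. eapply is_RInt_ext_R; [intros x _; rewrite tech5; reflexivity |].
  apply is_RInt_plus_R; [exact IH | apply is_RInt_hyp_term].
Qed.

Lemma succ_pow_sum_closed (N : nat) (x : R) :
  sum_f_R0 (fun n => INR (S n) * x^n) N * (1 - x)^2
  = 1 - INR (S (S N)) * x^(S N) + INR (S N) * x^(S (S N)).
Proof.
  induction N as [| N IH]; [simpl; ring |].
  rewrite tech5, Rmult_plus_distr_r, IH, !S_INR. simpl pow. ring.
Qed.

Lemma succ_pow_sum_error (N : nat) (x z : R) : 0 <= x <= z -> z < 1 ->
  Rabs (sum_f_R0 (fun n => INR (S n) * x^n) N - 1 / (1 - x)^2)
  <= INR (S (S N)) * z^(S N) * 2 / (1 - z)^2.
Proof.
  intros Hx Hz. pose proof (succ_pow_sum_closed N x) as Hclosed.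
  assert (Hpos : 0 < (1 - x)^2) by (apply pow_lt; lra).
  replace (sum_f_R0 (fun n => INR (S n) * x^n) N - 1 / (1 - x)^2)
    with ((- INR (S (S N)) * x^(S N) + INR (S N) * x^(S (S N))) / (1 - x)^2).
  2: { apply Rmult_eq_reg_r with ((1 - x)^2); [| lra].
       rewrite Rmult_minus_distr_r, Hclosed. field. lra. }
  rewrite Rabs_div, (Rabs_pos_eq ((1 - x)^2)) by lra.
  assert (A1 : x^(S N) <= z^(S N)) by (apply pow_incr; lra).
  assert (A2 : 0 <= x^(S (S N)) <= x^(S N)).
  { rewrite <- (tech_pow_Rmult x (S N)). pose proof (pow_le x (S N) ltac:(lra)).
    split; nra. }
  pose proof (pos_INR (S N)).
  assert (A4 : INR (S N) <= INR (S (S N))) by (apply le_INR; lia).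
  assert (Hnum : Rabs (- INR (S (S N)) * x^(S N) + INR (S N) * x^(S (S N)))
                 <= INR (S (S N)) * z^(S N) * 2).
  { eapply Rle_trans; [apply Rabs_triang |].
    rewrite Rabs_mult, Rabs_Ropp, Rabs_mult, !Rabs_pos_eq by (try apply pow_le; lra). nra. }
  assert (0 < (1 - z)^2) by (apply pow_lt; lra).
  assert ((1 - z)^2 <= (1 - x)^2) by (apply pow_incr; lra).
  unfold Rdiv.
  apply Rmult_le_compat; [apply Rabs_pos | left; apply Rinv_0_lt_compat; lra | exact Hnum |].
  apply Rinv_le_contravar; lra.
Qed.

Lemma hyp_partial_sum_error (r : R) (N : nat) : -1 < r < 1 ->
  Rabs (sum_f_R0 (fun n => hyp_coef n * (r^2)^n) N - hyp_integral r)
  <= INR (S (S N)) * (r^2)^(S N) * 2 / (1 - r^2)^2.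
Proof.
  intros Hr. pose proof (one_minus_sq_pos r Hr). pose proof (pow2_ge_0 r).
  assert (HI : is_RInt (fun u => sum_f_R0 (fun n => INR (S n) * (r^2 * (1 - u^2))^n) N
                                 + (-1) * (1 / hyp_weight r u ^ 2)) 0 1
                 (sum_f_R0 (fun n => hyp_coef n * (r^2)^n) N + (-1) * hyp_integral r)).
  { apply is_RInt_plus_R; [apply is_RInt_hyp_partial_sum |].
    apply is_RInt_scal_R, RInt_correct_R, ex_RInt_hyp, Hr. }
  replace (sum_f_R0 (fun n => hyp_coef n * (r^2)^n) N - hyp_integral r)
    with (sum_f_R0 (fun n => hyp_coef n * (r^2)^n) N + (-1) * hyp_integral r) by ring.
  replace (INR (S (S N)) * (r^2)^(S N) * 2 / (1 - r^2)^2)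
    with ((1 - 0) * (INR (S (S N)) * (r^2)^(S N) * 2 / (1 - r^2)^2)) by ring.
  eapply is_RInt_abs_le; [lra | | exact HI].
  intros u Hu. assert (0 <= u^2 <= 1) by (split; [apply pow2_ge_0 | simpl; nra]).
  pose proof (succ_pow_sum_error N (r^2 * (1 - u^2)) (r^2) ltac:(split; nra) ltac:(lra)) as Herr.
  unfold hyp_weight.
  cbv beta. replace (-1 * (1 / (1 - r^2 * (1 - u^2)) ^ 2)) with (- (1 / (1 - r^2 * (1 - u^2)) ^ 2))
    by ring.
  exact Herr.
Qed.

Lemma hyp_series_sum (r : R) : -1 < r < 1 ->
  infinite_sum (fun n => hyp_coef n * (r^2)^n) (hyp_integral r).
Proof.
  intros Hr eps Heps. pose proof (one_minus_sq_pos r Hr). pose proof (pow2_ge_0 r).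
  assert (Hden : 0 < (1 - r^2)^2) by (apply pow_lt; lra).
  assert (Heps' : 0 < eps * (1 - r^2)^2 / 2) by (apply Rdiv_lt_0_compat; nra).
  pose proof (lim_succ_mul_pow (r^2) ltac:(lra)) as Hlim. apply is_lim_seq_spec in Hlim.
  destruct (Hlim (mkposreal _ Heps')) as [N0 HN0].
  exists N0. intros n Hn. unfold R_dist.
  eapply Rle_lt_trans; [apply hyp_partial_sum_error, Hr |].
  specialize (HN0 (S n) ltac:(lia)). simpl pos in HN0. rewrite Rminus_0_r in HN0.
  rewrite Rabs_pos_eq in HN0 by (apply Rmult_le_pos; [apply pos_INR | apply pow_le; lra]).
  apply Rmult_lt_reg_r with ((1 - r^2)^2); [exact Hden |].
  replace (INR (S (S n)) * (r^2) ^ S n * 2 / (1 - r^2) ^ 2 * (1 - r^2) ^ 2)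
    with (INR (S (S n)) * (r^2) ^ S n * 2) by (field; lra).
  lra.
Qed.

Lemma hyp2F1_integral (r : R) : -1 < r < 1 -> hyp2F1 2 1 (3/2) (r^2) = hyp_integral r.
Proof.
  intros Hr. unfold hyp2F1. apply the_val_unique; [now apply hyp_series_sum |].
  intros w Hw. eapply uniqueness_sum; [exact Hw | now apply hyp_series_sum].
Qed.

(* [hyp_integral r >= 1] (as [0 < W <= 1]), so it can be inverted. *)
Lemma hyp_integral_ge_1 (r : R) : -1 < r < 1 -> 1 <= hyp_integral r.
Proof.
  intros Hr. unfold hyp_integral.
  apply Rle_trans with (RInt (fun _ => 1) 0 1).
  - rewrite RInt_const. unfold scal; simpl; unfold mult; simpl. lra.
  - apply RInt_le; [lra | apply ex_RInt_const | now apply ex_RInt_hyp |].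
    intros x Hx. pose proof (hyp_weight_pos r x Hr).
    assert (hyp_weight r x <= 1)
      by (unfold hyp_weight; pose proof (pow2_ge_0 r); assert (0 <= 1 - x^2) by (simpl; nra); nra).
    assert (hyp_weight r x ^ 2 <= 1) by (simpl; nra).
    assert (0 < hyp_weight r x ^ 2) by (apply pow_lt; lra).
    apply Rmult_le_reg_r with (hyp_weight r x ^ 2); [lra |]. field_simplify; lra.
Qed.

Theorem mainTheorem9 (r : R) (hr : -1 < r < 1) :
  (exists Z, is_improper_R (fun x => p_C x * Jfun x 5 r 1) Z) /\
  forall b : R, b <> 0 ->
    posterior5 r b =
    / hyp2F1 2 1 (3 / 2) (r ^ 2) * (1 / (1 + b ^ 2)) *
    (Rabs b * (b ^ 2 - r * b + 1) / (b ^ 2 - 2 * r * b + 1) ^ 2).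
Proof.
  pose proof (normalising_integral r hr) as Hnorm.
  split; [eexists; exact Hnorm |].
  intros b Hb. unfold posterior5.
  assert (HZ : the_val (is_improper_R (fun x => p_C x * Jfun x 5 r 1))
               = J_const r / PI * hyp_integral r).
  { apply the_val_unique; [exact Hnorm |].
    intros w Hw. exact (improper_R_unique _ _ _ Hw Hnorm). }
  rewrite HZ, Jfun_closed, hyp2F1_integral by assumption.
  unfold p_C, posterior_shape.
  pose proof (hyp_integral_ge_1 r hr). pose proof (J_const_pos r hr). pose proof PI_RGT_0.
  pose proof (quadratic_pos r b hr). pose proof (pow2_ge_0 b).
  field. repeat split; lra.
Qed.
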